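(* Let $p$ be an odd prime and $x$ a $p$-adic integer. Let $m\in\{0,\ldots,p-1\}$ be the least nonnegative residue of $x$ modulo $p$, put $t=(x-m)/p$, and suppose $m<(p-1)/2$. Then $$ p\sum_{j=0}^m\sum_{k=p-m}^{p-1}\binom{x}{j}\binom{x+j}{j}\binom{x}{k}\binom{x+k}{k}\sum_{n=0}^{j+k}\frac{1}{n+1}\binom{n}{j}\binom{j}{n-k}\binom{p-1}{n} \equiv \frac{p^2t(t+1)(-1)^mH_{2m}}{2m+1}\pmod{p^3}. $$
   Context: For a $p$-adic integer $y$ and an integer $k$, $\binom{y}{k}=y(y-1)\cdots(y-k+1)/k!$ if $k\geq0$ and $\binom{y}{k}=0$ if $k<0$. $H_n=\sum_{i=1}^n1/i$. Congruences between $p$-adic numbers modulo $p^3$ mean the difference divided by $p^3$ is a $p$-adic integer. *)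

From mathcomp Require Import all_boot all_order all_algebra.
Set Implicit Arguments. Unset Strict Implicit. Unset Printing Implicit Defensive.
Import Order.TTheory GRing.Theory Num.Theory.
Local Open Scope ring_scope.

(* Q_p is modelled as the completion of Q: a p-adic number is represented by a
   p-adically Cauchy sequence of rationals; arithmetic is termwise. *)

Definition in_pZ (p k : nat) (q : rat) : bool :=
  ((p ^ k)%N %| `|numq q|%N)%N && ~~ (p %| `|denq q|%N)%N.

Definition padic_cauchy (p : nat) (u : nat -> rat) : Prop :=
  forall k : nat, exists N : nat, forall n m : nat, (N <= n)%N -> (N <= m)%N ->
    in_pZ p k (u n - u m).

Definition padic_int (p : nat) (u : nat -> rat) : Prop :=
  padic_cauchy p u /\ exists N : nat, forall n : nat, (N <= n)%N -> in_pZ p 0 (u n).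

Definition padic_in_pZ (p k : nat) (u : nat -> rat) : Prop :=
  exists N : nat, forall n : nat, (N <= n)%N -> in_pZ p k (u n).

Definition binq (y : rat) (k : nat) : rat :=
  (\prod_(i < k) (y - i%:R)) / (k`!)%:R.

Definition harm (n : nat) : rat := \sum_(1 <= i < n.+1) (i%:R)^-1.

(* binom(j, n-k) with the convention binom(j, negative) = 0 *)
Definition binz (j n k : nat) : nat := if (k <= n)%N then 'C(j, n - k) else 0%N.

Definition lhs27 (p m : nat) (x : rat) : rat :=
  p%:R * \sum_(0 <= j < m.+1) \sum_(p - m <= k < p)
     (binq x j * binq (x + j%:R) j * binq x k * binq (x + k%:R) k *
      \sum_(0 <= n < (j + k).+1)
        ((n.+1)%:R^-1 * ('C(n, j))%:R * (binz j n k)%:R * ('C(p.-1, n))%:R)).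

Definition rhs27 (p m : nat) (x : rat) : rat :=
  let t := (x - m%:R) / p%:R in
  (p%:R)^+2 * t * (t + 1) * (-1)^+m * harm (2 * m) / (2 * m + 1)%:R.

From HB Require Import structures.
From mathcomp Require Import all_boot all_order all_algebra.
From mathcomp Require Import zify ring.
Set Implicit Arguments. Unset Strict Implicit. Unset Printing Implicit Defensive.
Import GRing.Theory Num.Theory.
Local Open Scope ring_scope.

(* Write x = m + p t with t a p-adic integer, and q = p - 1 - k.  For j <= m the factor
   C(x,j) C(x+j,j) is congruent to C(m,j) C(m+j,j) mod p.  For p - m <= k < p the
   numerator of C(x,k) C(x+k,k) contains both x - m = p t and x + p - m = p (t + 1), so
   this factor is p^2 t (t + 1) W, where by Wilson's theorem
   W = q!^2 (m-1-q)! / (m+q+1)! mod p.  In the sum over n only the term n = p - 1 has p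
   in its denominator; it is C(p-1,j) C(j,q) / p with C(p-1,j) = (-1)^j mod p.  So mod p^3
   the left side is p^2 t (t + 1) times an explicit double sum of rationals, which the
   identity sum_j (-1)^j C(m,j) C(m+j,j) C(j,q) = (-1)^m C(m,q) C(m+q,q) and the partial
   fractions of 1/((m-q)(m+q+1)) evaluate to (-1)^m H_(2m) / (2m+1). *)

(* The local ring Z_(p); with coprimality (rather than p not dividing the denominator) it is
   a subring for every p, prime or not. *)
Definition pint (p : nat) : {pred rat} := fun q => coprime `|denq q| p.

Lemma pint_frac p (n d : int) : coprime `|d| p -> n%:~R / d%:~R \in pint p.
Proof.
case: divqP => [_|k x _]; first by rewrite unfold_in /= /coprime gcd1n.
by rewrite abszM coprimeMl => /andP[].
Qed.

Lemma pint_subring_closed p : subring_closed (pint p).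
Proof.
have den_coprime a : a \in pint p -> coprime `|denq a| p by [].
split; first by rewrite unfold_in /= /coprime gcd1n.
- move=> a b /den_coprime ca /den_coprime cb.
  have -> : a - b = (numq a * denq b - numq b * denq a)%:~R / (denq a * denq b)%:~R.
    rewrite -[a in LHS]divq_num_den -[b in LHS]divq_num_den intrB !intrM.
    by field; rewrite !intr_eq0 !denq_neq0.
  by apply: pint_frac; rewrite abszM coprimeMl ca.
- move=> a b /den_coprime ca /den_coprime cb.
  have -> : a * b = (numq a * numq b)%:~R / (denq a * denq b)%:~R.
    rewrite -[a in LHS]divq_num_den -[b in LHS]divq_num_den !intrM.
    by field; rewrite !intr_eq0 !denq_neq0.
  by apply: pint_frac; rewrite abszM coprimeMl ca.
Qed.

HB.instance Definition _ p :=
  GRing.isSubringClosed.Build rat (pint p) (pint_subring_closed p).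

Lemma pintVn p n : coprime n p -> n%:R^-1 \in pint p.
Proof.
move=> np; have -> : n%:R^-1 = 1%:~R / (n%:Z)%:~R :> rat by rewrite mul1r.
exact: pint_frac.
Qed.

Lemma coprime_fact p n : prime p -> (n < p)%N -> coprime n`! p.
Proof.
move=> p_pr; elim: n => [|n IHn] ltnp; first by rewrite /coprime gcd1n.
rewrite factS coprimeMl IHn ?andbT 1?ltnW // coprime_sym prime_coprime //.
by rewrite gtnNdvd.
Qed.

Lemma pintVfact p n : prime p -> (n < p)%N -> n`!%:R^-1 \in pint p.
Proof. by move=> p_pr ltnp; apply/pintVn/coprime_fact. Qed.

Lemma pint_binq p y k : prime p -> (k < p)%N -> y \in pint p -> binq y k \in pint p.
Proof.
move=> p_pr ltkp yp; rewrite rpredM ?pintVfact // rpred_prod // => i _.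
by rewrite rpredB ?rpred_nat.
Qed.

(* p^k Z_(p).  For p = 0 < k the division by 0 makes this all of rat. *)
Definition pZ (p k : nat) : {pred rat} := fun q => q / p%:R ^+ k \in pint p.

Lemma pZ_zmod_closed p k : zmod_closed (pZ p k).
Proof.
split=> [|a b ap bp]; first by rewrite unfold_in /= mul0r rpred0.
by rewrite unfold_in /= mulrBl rpredB.
Qed.

HB.instance Definition _ p k :=
  GRing.isZmodClosed.Build rat (pZ p k) (pZ_zmod_closed p k).

Lemma pZE p k q : (q \in pZ p k) = (q / p%:R ^+ k \in pint p).
Proof. by []. Qed.

Lemma pZ0E p q : (q \in pZ p 0) = (q \in pint p).
Proof. by rewrite pZE expr0 invr1 mulr1. Qed.

Lemma pZM p k l a b : a \in pZ p k -> b \in pZ p l -> a * b \in pZ p (k + l).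
Proof.
by rewrite !pZE exprD invfM mulrACA; apply: rpredM. Qed.

Lemma pZMl p k a b : a \in pint p -> b \in pZ p k -> a * b \in pZ p k.
Proof. by rewrite -pZ0E; apply: pZM. Qed.

Lemma pZMr p k a b : a \in pint p -> b \in pZ p k -> b * a \in pZ p k.
Proof. by rewrite mulrC; apply: pZMl. Qed.

Lemma pZ_pint p k q : (0 < p)%N -> q \in pZ p k -> q \in pint p.
Proof.
move=> p_gt0; rewrite pZE => qp.
have pk_neq0 : p%:R ^+ k != 0 :> rat by rewrite expf_neq0 // pnatr_eq0 -lt0n.
by rewrite -(divfK pk_neq0 q) rpredM ?rpredX ?rpred_nat.
Qed.

Lemma pZ_expr p k : p%:R ^+ k \in pZ p k.
Proof.
rewrite pZE; have [->|pk0] := eqVneq (p%:R ^+ k : rat) 0.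
  by rewrite mul0r rpred0.
by rewrite mulfV // rpred1.
Qed.

Lemma pZ_pmul p a : a \in pint p -> p%:R * a \in pZ p 1.
Proof. by move=> ap; rewrite pZMr ?(pZ_expr p 1). Qed.

Lemma pZ_nat p n : (p %| n)%N -> n%:R \in pZ p 1.
Proof. by case/dvdnP=> c ->; rewrite natrM mulrC pZ_pmul ?rpred_nat. Qed.

Lemma in_pZE p k q : prime p -> in_pZ p k q = (q \in pZ p k).
Proof.
move=> p_pr; have pk_neq0 : p%:R ^+ k != 0 :> rat.
  by rewrite expf_neq0 ?pnatr_eq0 -?lt0n ?prime_gt0.
rewrite /in_pZ -prime_coprime // coprime_sym pZE.
apply/andP/idP => [[pk_dvd cop_den] | r_int].
  have /dvdzP[c numq_eq] : ((p ^ k)%N %| numq q)%Z := pk_dvd.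
  have -> : q / p%:R ^+ k = c%:~R / (denq q)%:~R.
    rewrite -[q in LHS]divq_num_den numq_eq intrM.
    have -> : ((p ^ k)%N%:~R : rat) = p%:R ^+ k by rewrite -natrX.
    by field; rewrite pk_neq0 intr_eq0 denq_neq0.
  exact: pint_frac.
set r := q / p%:R ^+ k in r_int.
have cross : numq q * denq r = numq r * (p ^ k)%N * denq q.
  apply: (@intr_inj rat); rewrite !intrM !numqE /r.
  have -> : ((p ^ k)%N%:~R : rat) = p%:R ^+ k by rewrite -natrX.
  by field.
have {}cross : (`|numq q| * `|denq r| = `|numq r| * p ^ k * `|denq q|)%N.
  by move/(congr1 absz): cross; rewrite !abszM.
split.
  have : (p ^ k %| `|numq q| * `|denq r|)%N by rewrite cross mulnAC dvdn_mull.
  by rewrite Gauss_dvdl // coprimeXl // coprime_sym.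
have : (`|denq q| %| `|numq q| * `|denq r|)%N by rewrite cross dvdn_mull.
rewrite Gauss_dvdr 1?coprime_sym ?coprime_num_den // => /coprime_dvdl/(_ r_int).
by rewrite coprime_sym.
Qed.

Lemma pcong_mul p a b c d : a \in pint p -> d \in pint p ->
  a - b \in pZ p 1 -> c - d \in pZ p 1 -> a * c - b * d \in pZ p 1.
Proof.
move=> ap dp ab cd; have -> : a * c - b * d = a * (c - d) + (a - b) * d by ring.
by rewrite rpredD ?(pZMl ap) ?(pZMr dp).
Qed.

Lemma pcong_prod p I (r : seq I) (P : pred I) (F G : I -> rat) :
  (forall i, P i -> F i \in pint p) -> (forall i, P i -> G i \in pint p) ->
  (forall i, P i -> F i - G i \in pZ p 1) ->
  \prod_(i <- r | P i) F i - \prod_(i <- r | P i) G i \in pZ p 1.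
Proof.
move=> Fp Gp FG; elim: r => [|i r IHr]; first by rewrite !big_nil subrr rpred0.
rewrite !big_cons; case: ifP => // Pi.
by apply: pcong_mul; rewrite ?Fp ?FG ?rpred_prod.
Qed.

Lemma pcong_prod_sub p I (r : seq I) (P : pred I) (c : I -> nat) y z :
  y \in pint p -> z \in pint p -> y - z \in pZ p 1 ->
  \prod_(i <- r | P i) (y - (c i)%:R) - \prod_(i <- r | P i) (z - (c i)%:R) \in pZ p 1.
Proof.
move=> yp zp yz; apply: pcong_prod => i _; last by rewrite opprB addrA subrK.
  by rewrite rpredB ?rpred_nat.
by rewrite rpredB ?rpred_nat.
Qed.

Lemma binq_pcong p y z k : prime p -> (k < p)%N -> y \in pint p -> z \in pint p ->
  y - z \in pZ p 1 -> binq y k - binq z k \in pZ p 1.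
Proof.
by move=> p_pr ltkp yp zp yz; rewrite /binq -mulrBl pZMr ?pintVfact ?pcong_prod_sub.
Qed.

Lemma bin_pred_pcong p j : prime p -> (j < p)%N -> 'C(p.-1, j)%:R - (-1) ^+ j \in pZ p 1.
Proof.
move=> p_pr; elim: j => [|j IHj] ltjp; first by rewrite bin0 expr0 subrr rpred0.
have -> : 'C(p.-1, j.+1)%:R - (-1) ^+ j.+1 =
           'C(p, j.+1)%:R - ('C(p.-1, j)%:R - (-1) ^+ j) :> rat.
  by rewrite -[in 'C(p, _)](prednK (prime_gt0 p_pr)) binS natrD exprS; ring.
by rewrite rpredB ?IHj 1?ltnW // pZ_nat ?prime_dvd_bin.
Qed.

Lemma wilson_pcong p r : prime p -> (r < p)%N ->
  ((p.-1 - r)`! * r`!)%:R - (-1) ^+ r.+1 \in pZ p 1.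
Proof.
move=> p_pr; elim: r => [|r IHr] ltrp.
  by rewrite subn0 muln1 expr1 opprK natr1 pZ_nat // -Wilson ?prime_gt1.
have {}IHr := IHr (ltnW ltrp).
have p_eq : (p.-1 - r = (p.-1 - r.+1).+1)%N by lia.
rewrite p_eq factS in IHr.
have -> : ((p.-1 - r.+1)`! * r.+1`!)%:R - (-1) ^+ r.+2 =
    p%:R * ((p.-1 - r.+1)`! * r`!)%:R -
    (((p.-1 - r.+1).+1 * (p.-1 - r.+1)`! * r`!)%:R - (-1) ^+ r.+1) :> rat.
  rewrite exprS factS !natrM.
  have -> : (p.-1 - r.+1).+1%:R = p%:R - r.+1%:R :> rat.
    by rewrite -natrB; [congr _%:R; lia | lia].
  ring.
by rewrite rpredB // pZ_pmul ?rpred_nat.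
Qed.

Lemma alt_sum_binS n (X : nat -> rat) :
  \sum_(i < n.+2) (-1) ^+ i * 'C(n.+1, i)%:R * X i =
  \sum_(i < n.+1) (-1) ^+ i * 'C(n, i)%:R * (X i - X i.+1).
Proof.
rewrite big_ord_recl /=.
rewrite (_ : \sum_(i < n.+1) _ = \sum_(i < n.+1) - ((-1) ^+ i * 'C(n, i.+1)%:R * X i.+1)
   - \sum_(i < n.+1) (-1) ^+ i * 'C(n, i)%:R * X i.+1); last first.
  by rewrite -sumrB; apply: eq_bigr => i _; rewrite /bump /= binS natrD exprS; ring.
under [in RHS]eq_bigr => i _ do rewrite mulrBr.
rewrite sumrB addrA; congr (_ - _).
rewrite [in RHS]big_ord_recl /= !bin0 !expr0 !mul1r; congr (_ + _).
rewrite big_ord_recr /= bin_small // mulr0 mul0r oppr0 addr0.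
by apply: eq_bigr => i _; rewrite /bump /= exprS; ring.
Qed.

Lemma alt_sum_bin_shift n a r : (n <= r)%N ->
  \sum_(i < n.+1) (-1) ^+ i * ('C(n, i) * 'C(a + i, r))%:R
  = (-1) ^+ n * 'C(a, r - n)%:R :> rat.
Proof.
under eq_bigr => i _ do rewrite natrM mulrA.
elim: n a r => [|n IHn] a r lenr; first by rewrite big_ord1 /= addn0 subn0 mul1r.
case: r lenr => // r lenr.
rewrite (alt_sum_binS n (fun i => 'C(a + i, r.+1)%:R)) subSS exprS -mulrA -IHn //.
rewrite mulN1r -sumrN.
by apply: eq_bigr => i _; rewrite addnS binS natrD; ring.
Qed.

Lemma fact_neq0 n : n`!%:R != 0 :> rat.
Proof. by rewrite pnatr_eq0 -lt0n fact_gt0. Qed.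

Lemma bin_ratE n k : (k <= n)%N ->
  'C(n, k)%:R = n`!%:R / (k`!%:R * (n - k)`!%:R) :> rat.
Proof. by move=> lekn; rewrite -(bin_fact lekn) !natrM mulfK // mulf_neq0 ?fact_neq0. Qed.

Lemma bin_trinomial m j k : ('C(m + j, j) * 'C(j, k) = 'C(m + k, k) * 'C(m + j, m + k))%N.
Proof.
have [ltjk | lekj] := ltnP j k.
  by rewrite (bin_small ltjk) (@bin_small (m + j) (m + k)) ?muln0 // ltn_add2l.
apply/eqP; rewrite -(eqr_nat rat) !natrM; apply/eqP.
rewrite !bin_ratE ?leq_addl ?leq_add2l // !addnK subnDl.
by field; rewrite !fact_neq0.
Qed.

Lemma alt_sum_bin_trinomial m k :
  \sum_(j < m.+1) (-1) ^+ j * ('C(m, j) * 'C(m + j, j) * 'C(j, k))%:R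
  = (-1) ^+ m * ('C(m, k) * 'C(m + k, k))%:R :> rat.
Proof.
under eq_bigr => j _ do rewrite -mulnA bin_trinomial mulnCA natrM mulrCA.
by rewrite -mulr_sumr alt_sum_bin_shift ?leq_addr // addKn natrM; ring.
Qed.

(* The residue mod p of C(x,p-1-k) C(x+p-1-k,p-1-k) / (p^2 t (t + 1)), see
   [binq_pair_vanish]. *)
Definition weight (m k : nat) : rat := (k`! ^ 2 * (m.-1 - k)`!)%:R / (m + k).+1`!%:R.

Lemma weight_bin m k : (k < m)%N ->
  weight m k * ('C(m, k) * 'C(m + k, k))%:R = ((m - k) * (m + k).+1)%:R^-1.
Proof.
move=> ltkm; rewrite /weight factS !natrM !bin_ratE ?leq_addl 1?ltnW // addnK.
have -> : (m - k = (m.-1 - k).+1)%N by lia.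
rewrite factS natrM.
have add1n_neq0 n : 1 + n%:R != 0 :> rat by rewrite addrC natr1 pnatr_eq0.
by field; rewrite -natrD !add1n_neq0 !fact_neq0.
Qed.

Lemma sum_inv_harm m :
  \sum_(0 <= k < m) ((m - k) * (m + k).+1)%:R^-1 = harm (2 * m) / (2 * m + 1)%:R.
Proof.
have low : \sum_(0 <= k < m) (m - k)%:R^-1 = \sum_(1 <= i < m.+1) i%:R^-1 :> rat.
  rewrite big_add1 /= big_nat_rev /=; apply: eq_big_nat => k ltkm.
  by congr (_%:R^-1); lia.
have high :
    \sum_(0 <= k < m) (m + k).+1%:R^-1 = \sum_(m.+1 <= i < (2 * m).+1) i%:R^-1 :> rat.
  rewrite -[m.+1]add0n big_addn (_ : (2 * m).+1 - m.+1 = m)%N; last by lia.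
  by apply: eq_big_nat => k _; congr (_%:R^-1); lia.
rewrite /harm [in RHS](big_cat_nat _ (n := m.+1)) //=; try lia.
rewrite -low -high -big_split mulr_suml /=; apply: eq_big_nat => k ltkm.
rewrite natrM; set a : rat := (m - k)%:R; set b : rat := (m + k).+1%:R.
have a_neq0 : a != 0 by rewrite pnatr_eq0; lia.
have b_neq0 : b != 0 by rewrite pnatr_eq0.
have ab : (2 * m + 1)%:R = a + b by rewrite -natrD; congr _%:R; lia.
have ab_neq0 : a + b != 0 by rewrite -ab pnatr_eq0 addn1.
by rewrite ab; clearbody a b; field; rewrite a_neq0 b_neq0 ab_neq0.
Qed.

Lemma alt_sum_weight m :
  \sum_(0 <= j < m.+1) \sum_(0 <= k < m)
     (-1) ^+ j * ('C(m, j) * 'C(m + j, j) * 'C(j, k))%:R * weight m k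
  = (-1) ^+ m * harm (2 * m) / (2 * m + 1)%:R.
Proof.
rewrite exchange_big_nat -mulrA -sum_inv_harm mulr_sumr; apply: eq_big_nat => k ltkm.
rewrite -mulr_suml big_mkord alt_sum_bin_trinomial -mulrA [_ * weight _ _]mulrC.
by rewrite weight_bin //; case/andP: ltkm.
Qed.

Lemma prod_sub_nat n k : \prod_(i < k) (n%:R - i%:R) = (n ^_ k)%:R :> rat.
Proof.
elim: k => [|k IHk]; first by rewrite big_ord0 ffactn0.
rewrite big_ord_recr /= IHk ffactnSr natrM.
by case: (leqP k n) => [/natrB -> // | ltnk]; rewrite ffact_small // !mul0r.
Qed.

Lemma binq_nat n k : binq n%:R k = 'C(n, k)%:R.
Proof. by rewrite /binq prod_sub_nat -bin_ffact natrM mulfK ?fact_neq0. Qed.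

Lemma binqDn y k : binq (y + k%:R) k = (-1) ^+ k * binq (- y - 1) k.
Proof.
rewrite /binq mulrA; congr (_ / _).
have -> : (-1) ^+ k = \prod_(i < k) (-1) :> rat by rewrite prodr_const card_ord.
rewrite (reindex_inj rev_ord_inj) -big_split /=.
by apply: eq_bigr => i _; rewrite natrB ?ltn_ord // -natr1; ring.
Qed.

Definition skip_prod (y : rat) (m k : nat) : rat := \prod_(i < k | i != m :> nat) (y - i%:R).

Lemma binq_skipE y m k : (m < k)%N -> binq y k = (y - m%:R) * skip_prod y m k / k`!%:R.
Proof. by move=> ltmk; rewrite /binq (bigD1 (Ordinal ltmk)). Qed.

Lemma skip_prod_nat m n : skip_prod m%:R m (m + n).+1 = (-1) ^+ n * (m`! * n`!)%:R.
Proof.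
elim: n => [|n IHn].
  rewrite /skip_prod big_mkcond big_ord_recr /= addn0 eqxx mulr1 expr0 mul1r muln1.
  rewrite -ffactnn -prod_sub_nat.
  by apply: eq_bigr => i _; rewrite neq_ltn ltn_ord.
rewrite /skip_prod addnS big_mkcond big_ord_recr /= -big_mkcond -/(skip_prod _ _ _) IHn.
rewrite gtn_eqF ?ltnS ?leq_addr // factS exprS !natrM -!natr1 natrD /=.
ring.
Qed.

Lemma skip_prod_pcong p y m k : y \in pint p -> y - m%:R \in pZ p 1 ->
  skip_prod y m k - skip_prod m%:R m k \in pZ p 1.
Proof. by move=> yp ym; rewrite pcong_prod_sub ?rpred_nat. Qed.

Definition binq_pair_cofactor (y z : rat) (m m' k : nat) : rat :=
  (-1) ^+ k.+1 * skip_prod y m k * skip_prod z m' k / k`!%:R ^+ 2.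

Lemma binq_pair_factor y m m' k : (m < k)%N -> (m' < k)%N ->
  binq y k * binq (y + k%:R) k =
  (y - m%:R) * (y + m'.+1%:R) * binq_pair_cofactor y (- y - 1) m m' k.
Proof.
move=> ltmk ltm'k; rewrite binqDn (binq_skipE _ ltmk) (binq_skipE _ ltm'k).
by rewrite /binq_pair_cofactor exprS -natr1; field; rewrite fact_neq0.
Qed.

Lemma binq_pair_cofactor_pcong p y z m m' k : prime p -> (k < p)%N ->
  y \in pint p -> z \in pint p -> y - m%:R \in pZ p 1 -> z - m'%:R \in pZ p 1 ->
  binq_pair_cofactor y z m m' k - binq_pair_cofactor m%:R m'%:R m m' k \in pZ p 1.
Proof.
move=> p_pr ltkp yp zp ym zm'; rewrite /binq_pair_cofactor -mulrBl -exprVn.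
apply: pZMr; first by rewrite rpredX ?pintVfact.
rewrite -!mulrA -mulrBr; apply: pZMl; first by rewrite rpredX ?rpredN ?rpred1.
by apply: pcong_mul; rewrite ?skip_prod_pcong ?rpred_prod // => i _; rewrite rpredB ?rpred_nat.
Qed.

Lemma binq_pair_cofactor_wilson p m q : prime p -> odd p -> (q < m)%N -> (m + q < p.-1)%N ->
  binq_pair_cofactor m%:R (p.-1 - m)%:R m (p.-1 - m) (p.-1 - q) - weight m q \in pZ p 1.
Proof.
(* After clearing denominators, each factor pair is a Wilson congruence. *)
move=> p_pr p_odd ltqm ltmqp.
have w_m := wilson_pcong p_pr (ltac:(lia) : (m < p)%N).
have w_q := wilson_pcong p_pr (ltac:(lia) : (q < p)%N).
have w_mq := wilson_pcong p_pr (ltac:(lia) : ((m + q).+1 < p)%N).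
set k := (p.-1 - q)%N in w_q *; set m' := (p.-1 - m)%N in w_m *.
set n := (p.-1 - (m + q).+1)%N in w_mq; set n' := (m.-1 - q)%N.
have skip_m : skip_prod m%:R m k = (-1) ^+ n * (m`! * n`!)%:R.
  by rewrite -skip_prod_nat /k /n; congr skip_prod; lia.
have skip_m' : skip_prod m'%:R m' k = (-1) ^+ n' * (m'`! * n'`!)%:R.
  by rewrite -skip_prod_nat /k /m' /n'; congr skip_prod; lia.
have F_neq0 : (m + q).+1`!%:R != 0 :> rat by apply: fact_neq0.
set F := (m + q).+1`! in w_mq F_neq0 *.
set X := (m'`! * m`!)%:R in w_m; set Y := (n`! * F)%:R in w_mq.
set Z := (k`! * q`!)%:R in w_q; set s := (-1) ^+ (k.+1 + n + n') : rat.
have -> : binq_pair_cofactor m%:R m'%:R m m' k - weight m q =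
    n'`!%:R * (s * X * Y - Z * Z) / (k`!%:R ^+ 2 * F%:R).
  rewrite /binq_pair_cofactor skip_m skip_m' /weight -/F -/n' /s /X /Y /Z; clearbody F.
  by rewrite !natrM !exprD; field; rewrite F_neq0 fact_neq0.
apply: pZMr; first by rewrite invfM -exprVn rpredM ?rpredX ?pintVfact //; lia.
apply: pZMl; first exact: rpred_nat.
have sgn1 : s * ((-1) ^+ m.+1 * (-1) ^+ (m + q).+2) = 1.
  by rewrite /s -!exprD -signr_odd (_ : odd _ = false) // /k /n /n'; lia.
have sgn2 : (-1) ^+ q.+1 * (-1) ^+ q.+1 = 1 :> rat.
  by rewrite -exprD addnn -signr_odd odd_double.
have -> : s * X * Y - Z * Z = s * (X * Y - (-1) ^+ m.+1 * (-1) ^+ (m + q).+2)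
                              - (Z * Z - (-1) ^+ q.+1 * (-1) ^+ q.+1).
  by rewrite mulrBr sgn1 sgn2; ring.
by rewrite rpredB ?pZMl ?rpredX ?rpredN ?rpred1 //
   pcong_mul ?rpred_nat ?rpredX ?rpredN ?rpred1.
Qed.

Lemma binq_pair_pcong p y m j : prime p -> (m + j < p)%N -> y \in pint p ->
  y - m%:R \in pZ p 1 ->
  binq y j * binq (y + j%:R) j - ('C(m, j) * 'C(m + j, j))%:R \in pZ p 1.
Proof.
move=> p_pr ltmjp yp ym; rewrite natrM -!binq_nat natrD.
have ltjp : (j < p)%N by lia.
apply: pcong_mul; first exact: pint_binq.
- by rewrite pint_binq ?rpredD ?rpred_nat.
- by rewrite binq_pcong ?rpred_nat.
apply: binq_pcong => //; try by rewrite rpredD ?rpred_nat.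
by rewrite opprD addrACA subrr addr0.
Qed.

(* Only the term n = p - 1 has p in its denominator. *)
Lemma inner_sum_residue p j k : prime p -> (k < p)%N ->
  \sum_(0 <= n < (j + k).+1) n.+1%:R^-1 * 'C(n, j)%:R * (binz j n k)%:R * 'C(p.-1, n)%:R
    - p%:R^-1 * 'C(p.-1, j)%:R * 'C(j, p.-1 - k)%:R \in pint p.
Proof.
move=> p_pr ltkp; have p_gt0 := prime_gt0 p_pr.
have term_int (n : nat) : n != p.-1 ->
    n.+1%:R^-1 * 'C(n, j)%:R * (binz j n k)%:R * 'C(p.-1, n)%:R \in pint p.
  move=> n_neq; have [ltnp | lepn] := ltnP n.+1 p.
    rewrite !rpredM ?rpred_nat ?pintVn // coprime_sym prime_coprime // gtnNdvd //.
  by rewrite (@bin_small p.-1 n) ?mulr0 ?rpred0 //; lia.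
have [ltjk | lejk] := ltnP (j + k).+1 p.
  rewrite (@bin_small j) ?mulr0 ?subr0; last by lia.
  by rewrite big_nat_cond rpred_sum // => n /andP[n_range _]; apply: term_int; lia.
rewrite (big_cat_nat _ (n := p.-1)) //=; last by lia.
rewrite [\sum_(p.-1 <= i < _) _]big_ltn /=; last by lia.
rewrite prednK ?prime_gt0 // binn mulr1 /binz (_ : (k <= p.-1)%N); last by lia.
rewrite addrCA [_ + (_ + _)]addrC addrK rpredD //.
all: by rewrite big_nat_cond rpred_sum // => n /andP[n_range _]; apply: term_int; lia.
Qed.

Lemma binq_pair_vanish p m t k : prime p -> odd p -> (2 * m < p)%N ->
  (p - m <= k < p)%N -> t \in pint p ->
  exists2 W, binq (m%:R + p%:R * t) k * binq (m%:R + p%:R * t + k%:R) k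
               = p%:R ^+ 2 * (t * (t + 1)) * W
           & W - weight m (p.-1 - k) \in pZ p 1.
Proof.
move=> p_pr p_odd lt2mp /andP[lekp ltkp] tp; have p_gt0 := prime_gt0 p_pr.
have [ltmk ltm'k ltqm ltmqp] :
    [/\ m < k, p.-1 - m < k, p.-1 - k < m & m + (p.-1 - k) < p.-1]%N by split; lia.
set y := m%:R + p%:R * t; set m' := (p.-1 - m)%N.
have yp : y \in pint p by rewrite rpredD ?rpredM ?rpred_nat.
have ym : y - m%:R = p%:R * t by rewrite /y addrC addKr.
have ym' : y + m'.+1%:R = p%:R * (t + 1).
  by rewrite /y /m' (_ : (p.-1 - m).+1 = p - m)%N ?natrB; [ring | lia | lia].
have zm : - y - 1 - m'%:R = - (p%:R * (t + 1)) by rewrite -ym' -natr1; ring.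
exists (binq_pair_cofactor y (- y - 1) m m' k).
  by rewrite (binq_pair_factor _ ltmk ltm'k) ym ym'; ring.
have W1 :
    binq_pair_cofactor y (- y - 1) m m' k - binq_pair_cofactor m%:R m'%:R m m' k \in pZ p 1.
  apply: binq_pair_cofactor_pcong => //; first by rewrite rpredB ?rpredN ?rpred1.
    by rewrite ym pZ_pmul.
  by rewrite zm rpredN pZ_pmul // rpredD ?rpred1.
have := binq_pair_cofactor_wilson p_pr p_odd ltqm ltmqp; rewrite subKn => [W2|]; last by lia.
by move: (rpredD W1 W2); rewrite addrA subrK.
Qed.

(* The shape of one term of the double sum: A = C(x,j) C(x+j,j), p^2 tau W = C(x,k) C(x+k,k),
   S is the sum over n, Cb = C(p-1,j) and Cj = C(j,p-1-k). *)
Lemma pcong3_product p A W S Cb Cj a w s tau : (0 < p)%N ->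
  A \in pint p -> w \in pint p -> s \in pint p -> tau \in pint p -> Cj \in pint p ->
  A - a \in pZ p 1 -> W - w \in pZ p 1 -> Cb - s \in pZ p 1 ->
  S - p%:R^-1 * Cb * Cj \in pint p ->
  p%:R * (A * (p%:R ^+ 2 * tau * W) * S) - p%:R ^+ 2 * tau * (s * (a * Cj) * w) \in pZ p 3.
Proof.
move=> p_gt0 Ap wp sp taup Cjp Aa Ww Cbs Sp.
have W_int : W \in pint p by rewrite -(subrK w W) rpredD // (pZ_pint p_gt0 Ww).
have p_neq0 : p%:R != 0 :> rat by rewrite pnatr_eq0 -lt0n.
have -> : p%:R * (A * (p%:R ^+ 2 * tau * W) * S) - p%:R ^+ 2 * tau * (s * (a * Cj) * w) =
    p%:R ^+ 2 * (tau * Cj * (A * W * Cb - a * w * s)) +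
    p%:R ^+ 3 * (tau * A * W * (S - p%:R^-1 * Cb * Cj)).
  by field.
apply: rpredD; last by apply: pZMr (pZ_expr p 3); rewrite !rpredM.
apply: (@pZM p 2 1); first exact: pZ_expr.
by rewrite pZMl ?rpredM // pcong_mul ?rpredM // pcong_mul.
Qed.

Lemma lhs27_term_pcong p m t j k : prime p -> odd p -> (2 * m < p)%N -> (j <= m)%N ->
  (p - m <= k < p)%N -> t \in pint p ->
  p%:R * (binq (m%:R + p%:R * t) j * binq (m%:R + p%:R * t + j%:R) j *
          binq (m%:R + p%:R * t) k * binq (m%:R + p%:R * t + k%:R) k *
          \sum_(0 <= n < (j + k).+1)
            (n.+1%:R^-1 * 'C(n, j)%:R * (binz j n k)%:R * 'C(p.-1, n)%:R))
  - p%:R ^+ 2 * (t * (t + 1)) *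
    ((-1) ^+ j * ('C(m, j) * 'C(m + j, j) * 'C(j, p.-1 - k))%:R * weight m (p.-1 - k))
  \in pZ p 3.
Proof.
move=> p_pr p_odd lt2mp lejm k_range tp; have p_gt0 := prime_gt0 p_pr.
have [ltkp ltmjp ltjp ltmqp] : [/\ k < p, m + j < p, j < p & (m + (p.-1 - k)).+1 < p]%N.
  by split; lia.
have [W B_eq W_cong] := binq_pair_vanish p_pr p_odd lt2mp k_range tp.
set y := m%:R + p%:R * t in B_eq *.
have yp : y \in pint p by rewrite rpredD ?rpredM ?rpred_nat.
have ym : y - m%:R \in pZ p 1 by rewrite /y addrC addKr pZ_pmul.
rewrite -[X in p%:R * (X * _)]mulrA B_eq natrM.
apply: (pcong3_product (Cb := 'C(p.-1, j)%:R)) => //.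
- by rewrite rpredM ?pint_binq // rpredD ?rpred_nat.
- by rewrite /weight rpredM ?rpred_nat ?pintVfact.
- by rewrite rpredX ?rpredN ?rpred1.
- by rewrite rpredM ?rpredD ?rpred1.
- exact: rpred_nat.
- exact: binq_pair_pcong.
- exact: bin_pred_pcong.
exact: inner_sum_residue.
Qed.

Lemma sum_nat_rev_sub (R : nmodType) (F : nat -> R) p m : (m <= p)%N ->
  \sum_(p - m <= k < p) F (p.-1 - k)%N = \sum_(0 <= k < m) F k.
Proof.
move=> lemp; rewrite big_nat_rev -{1}[(p - m)%N]add0n big_addn subKn //.
by apply: eq_big_nat => k /andP[_ ltkm]; congr F; lia.
Qed.

Lemma lhs27_rhs27_pZ p m t : prime p -> odd p -> (2 * m < p)%N -> t \in pint p ->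
  lhs27 p m (m%:R + p%:R * t) - rhs27 p m (m%:R + p%:R * t) \in pZ p 3.
Proof.
move=> p_pr p_odd lt2mp tp.
have p_neq0 : p%:R != 0 :> rat by rewrite pnatr_eq0 -lt0n prime_gt0.
have -> : rhs27 p m (m%:R + p%:R * t) = p%:R ^+ 2 * (t * (t + 1)) *
    \sum_(0 <= j < m.+1) \sum_(p - m <= k < p)
      (-1) ^+ j * ('C(m, j) * 'C(m + j, j) * 'C(j, p.-1 - k))%:R * weight m (p.-1 - k).
  have lemp : (m <= p)%N by lia.
  under eq_bigr => j _ do rewrite (sum_nat_rev_sub
     (fun k => (-1) ^+ j * ('C(m, j) * 'C(m + j, j) * 'C(j, k))%:R * weight m k) lemp).
  by rewrite alt_sum_weight /rhs27 /= addrC addKr [p%:R * t]mulrC mulfK //; ring.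
rewrite /lhs27 !mulr_sumr -sumrB big_nat_cond rpred_sum // => j /andP[/andP[_ lejm] _].
rewrite !mulr_sumr -sumrB big_nat_cond rpred_sum // => k /andP[k_range _].
exact: lhs27_term_pcong.
Qed.

Theorem lemma2p7 (p : nat) (x : nat -> rat) (m : nat) :
  prime p -> odd p -> padic_int p x ->
  (m < p)%N -> padic_in_pZ p 1 (fun n => x n - m%:R) ->
  (m < (p.-1)./2)%N ->
  padic_in_pZ p 3 (fun n => lhs27 p m (x n) - rhs27 p m (x n)).
Proof.
(* [padic_int p x] and [m < p] follow from the other hypotheses. *)
move=> p_pr p_odd _ _ [N xN] ltm; have lt2mp : (2 * m < p)%N by lia.
have p_neq0 : p%:R != 0 :> rat by rewrite pnatr_eq0 -lt0n prime_gt0.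
exists N => n leNn; rewrite in_pZE //.
have := xN n leNn; rewrite in_pZE // pZE expr1 => t_int.
have -> : x n = m%:R + p%:R * ((x n - m%:R) / p%:R) by field.
exact: lhs27_rhs27_pZ.
Qed.
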